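(* Consider the Cucker–Smale model with bonding force $$\dot{\mathbf{x}}_i=\mathbf{v}_i,\qquad \dot{\mathbf{v}}_i=\frac{\kappa_0}{N}\sum_{j=1}^N\psi(\|\mathbf{x}_j-\mathbf{x}_i\|)(\mathbf{v}_j-\mathbf{v}_i)+\frac{\kappa_1}{N}\sum_{j\ne i}\Big\langle\mathbf{v}_j-\mathbf{v}_i,\frac{\mathbf{x}_j-\mathbf{x}_i}{\|\mathbf{x}_j-\mathbf{x}_i\|}\Big\rangle\frac{\mathbf{x}_j-\mathbf{x}_i}{\|\mathbf{x}_j-\mathbf{x}_i\|}+\frac{\kappa_2}{N}\sum_{j\ne i}\big(\|\mathbf{x}_j-\mathbf{x}_i\|-d^\infty_{ij}\big)\frac{\mathbf{x}_j-\mathbf{x}_i}{\|\mathbf{x}_j-\mathbf{x}_i\|}.$$ Suppose $$\min_{i\ne j}\|\mathbf{x}_i^0-\mathbf{x}_j^0\|>0,\quad \min_{i\ne j}d^\infty_{ij}>\sqrt{\frac{2NE(0)}{\kappa_2}},\quad (X^0,V^0)\in S,\quad \kappa_0>0,\ \kappa_1>0,\ \kappa_2>0,$$ and let $\{(\mathbf{x}_i,\mathbf{v}_i)\}$ be a global smooth solution. Then: (i) $\sup_{0\le t<\infty}\max_{i,j}\|\mathbf{x}_i(t)-\mathbf{x}_j(t)\|<\infty$ and $\lim_{t\to\infty}\max_{i,j}\|\mathbf{v}_j(t)-\mathbf{v}_i(t)\|=0$; (ii) if $\sum_{i=1}^N\mathbf{v}_i^0=0$, then $\lim_{t\to\infty}\max_{1\le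 i\le N}\|\mathbf{v}_i(t)\|=0$.
   Context: $N\ge2$, $d\ge1$, Euclidean norm and inner product on $\mathbb{R}^d$; $[d^\infty_{ij}]$ real symmetric with zero diagonal; $(X^0,V^0)=(\mathbf{x}_i(0),\mathbf{v}_i(0))_i$. $E:=\frac12\sum_i\|\mathbf{v}_i\|^2+\frac{\kappa_2}{4N}\sum_{i,j}(\|\mathbf{x}_j-\mathbf{x}_i\|-d^\infty_{ij})^2$. $U:=\max_{i\ne j}d^\infty_{ij}+\sqrt{2NE(0)/\kappa_2}$, $S:=\{(X,V)\in\mathbb{R}^{2dN}:\max_{i\ne j}\|\mathbf{x}_i-\mathbf{x}_j\|\le U\}$. The weight $\psi:[0,\infty)\to[0,\infty)$ is locally Lipschitz with $0\le\psi(r)\le\psi_M$ for all $r\ge0$ and $\psi_m:=\min_{r\in[0,U]}\psi(r)>0$. A global smooth solution is a $C^1$ solution on $[0,\infty)$ with $\mathbf{x}_i(t)\ne\mathbf{x}_j(t)$ for $i\ne j$. *)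

From HB Require Import structures.
From mathcomp Require Import all_boot all_order all_algebra.
From mathcomp Require Import all_classical all_reals all_analysis.
Set Implicit Arguments. Unset Strict Implicit. Unset Printing Implicit Defensive.
Import Order.TTheory GRing.Theory Num.Theory.
Import numFieldNormedType.Exports.
Local Open Scope ring_scope.

Definition einner (R : realType) (d : nat) (u w : 'rV[R]_d) : R :=
  \sum_(k < d) u 0 k * w 0 k.
Definition enorm (R : realType) (d : nat) (u : 'rV[R]_d) : R :=
  Num.sqrt (einner u u).

Definition cs_force (R : realType) (N d : nat) (psi : R -> R)
  (k0 k1 k2 : R) (dinf : 'I_N -> 'I_N -> R)
  (X V : 'I_N -> 'rV[R]_d) (i : 'I_N) : 'rV[R]_d :=
  let e j := (enorm (X j - X i))^-1 *: (X j - X i) in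
  (k0 / N%:R) *: (\sum_(j < N) psi (enorm (X j - X i)) *: (V j - V i))
  + (k1 / N%:R) *: (\sum_(j < N | j != i) einner (V j - V i) (e j) *: e j)
  + (k2 / N%:R) *: (\sum_(j < N | j != i)
                      (enorm (X j - X i) - dinf i j) *: e j).

Definition cs_energy (R : realType) (N d : nat) (k2 : R)
  (dinf : 'I_N -> 'I_N -> R) (X V : 'I_N -> 'rV[R]_d) : R :=
  2^-1 * (\sum_(i < N) enorm (V i) ^+ 2)
  + (k2 / (4 * N%:R)) *
      (\sum_(i < N) \sum_(j < N) (enorm (X j - X i) - dinf i j) ^+ 2).

Definition cs_U (R : realType) (N d : nat) (k2 : R)
  (dinf : 'I_N -> 'I_N -> R) (X0 V0 : 'I_N -> 'rV[R]_d) : R :=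
  \big[Num.max/0]_(i < N) \big[Num.max/0]_(j < N | i != j) dinf i j
  + Num.sqrt (2 * N%:R * cs_energy k2 dinf X0 V0 / k2).

Definition in_S (R : realType) (N d : nat) (U : R) (X : 'I_N -> 'rV[R]_d) :
  Prop := forall i j : 'I_N, i != j -> enorm (X i - X j) <= U.

Definition loc_lipschitz0 (R : realType) (psi : R -> R) : Prop :=
  forall b : R, exists L : R, forall r s : R,
    0 <= r <= b -> 0 <= s <= b -> `|psi r - psi s| <= L * `|r - s|.

Definition global_smooth_solution (R : realType) (N d : nat) (psi : R -> R)
  (k0 k1 k2 : R) (dinf : 'I_N -> 'I_N -> R)
  (x v : 'I_N -> R -> 'rV[R]_d) : Prop :=
  forall t : R, 0 <= t ->
    (forall i : 'I_N, is_derive t 1 (x i) (v i t)) /\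
    (forall i : 'I_N, is_derive t 1 (v i)
        (cs_force psi k0 k1 k2 dinf (fun j => x j t) (fun j => v j t) i)) /\
    (forall i j : 'I_N, i != j -> x i t != x j t).

Definition max_pair (R : realType) (N d : nat) (F : 'I_N -> 'rV[R]_d) : R :=
  \big[Num.max/0]_(i < N) \big[Num.max/0]_(j < N) enorm (F j - F i).
Definition max_one (R : realType) (N d : nat) (F : 'I_N -> 'rV[R]_d) : R :=
  \big[Num.max/0]_(i < N) enorm (F i).

(* The energy E is a Lyapunov function: by the antisymmetry of the pairwise
   interactions, E' = -(k0/2N) sum psi(r_ij) |v_j - v_i|^2
   - (k1/2N) sum <v_j - v_i, e_ij>^2 <= 0.  Hence E(t) <= E(0), which bounds
   every speed by sqrt(2 E(0)) and every bond deviation |r_ij - d_ij| by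
   sqrt(2 N E(0) / k2), so all distances stay below U and psi >= psi_m along
   the flow.  Thus E' <= -c P for the velocity dispersion
   P = sum |v_j - v_i|^2, while P' is bounded below because all forces are
   bounded.  If P were >= eps at arbitrarily late times, E would drop by a
   fixed amount each time, contradicting E >= 0; so P -> 0.  The forces sum
   to zero, so momentum is conserved, and with zero momentum
   N v_i = sum_j (v_i - v_j) -> 0 as well. *)

From HB Require Import structures.
From mathcomp Require Import all_boot all_order all_algebra.
From mathcomp Require Import all_classical all_reals all_analysis.
From mathcomp Require Import ring lra.
Import Order.TTheory GRing.Theory Num.Theory.
Import numFieldNormedType.Exports.
Local Open Scope classical_set_scope.
Local Open Scope ring_scope.
Set Implicit Arguments. Unset Strict Implicit. Unset Printing Implicit Defensive.

Section RealDerivatives.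
Variable R : realType.
Implicit Types (f df : R -> R) (a b m t : R).

Lemma is_derive_sumr n (h : 'I_n -> R -> R) (dh : 'I_n -> R) t :
  (forall i, is_derive t 1 (h i) (dh i)) ->
  is_derive t 1 (fun s => \sum_(i < n) h i s) (\sum_(i < n) dh i).
Proof. by move=> hd; rewrite -fct_sumE; exact: is_derive_sum. Qed.

Lemma is_derive_sqr f (df : R) t : is_derive t 1 f df ->
  is_derive t 1 (fun s => f s ^+ 2) (2 * f t * df).
Proof.
move=> f_deriv; have := is_deriveX 2 f_deriv; rewrite exprfctE expr1 => f2_deriv.
exact: is_derive_eq f2_deriv _.
Qed.

Lemma is_derive_sqrt f (df : R) t : 0 < f t -> is_derive t 1 f df ->
  is_derive t 1 (fun s => Num.sqrt (f s)) ((2 * Num.sqrt (f t))^-1 * df).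
Proof. by move=> /is_derive1_sqrt; exact: is_derive1_comp. Qed.

Lemma is_derive_mxE d (a : R -> 'rV[R]_d) (da : 'rV[R]_d) t k :
  is_derive t 1 a da -> is_derive t 1 (fun s => a s 0 k) (da 0 k).
Proof.
move=> [a_derivable <-]; have /derivable_mxP a_derivable' := a_derivable.
by apply: DeriveDef; [exact: a_derivable' | rewrite derive_mx // mxE].
Qed.

Lemma MVT_nonneg f df a b : 0 <= a <= b ->
  (forall s : R, 0 <= s -> is_derive s 1 f (df s)) ->
  exists2 c, a <= c <= b & f b - f a = df c * (b - a).
Proof.
move=> /andP[a_ge0 ab] f_deriv.
have [||c] := @MVT_segment R f df a b ab.
- by move=> s; rewrite in_itv /= => /andP[a_s _]; apply: f_deriv; lra.
- apply: continuous_in_subspaceT => s; rewrite inE /= in_itv /= => /andP[a_s _].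
  by have [/derivable1_diffP/differentiable_continuous] :=
    f_deriv s (le_trans a_ge0 a_s).
by rewrite in_itv /= => c_ab ->; exists c.
Qed.

Lemma mean_value_le f df a b m : 0 <= a <= b ->
  (forall s : R, 0 <= s -> is_derive s 1 f (df s)) ->
  (forall s : R, a <= s <= b -> df s <= m) -> f b - f a <= m * (b - a).
Proof.
move=> ab f_deriv df_le; have [c c_ab ->] := MVT_nonneg ab f_deriv.
by rewrite ler_wpM2r ?df_le // subr_ge0; case/andP: ab.
Qed.

Lemma mean_value_ge f df a b m : 0 <= a <= b ->
  (forall s : R, 0 <= s -> is_derive s 1 f (df s)) ->
  (forall s : R, a <= s <= b -> m <= df s) -> m * (b - a) <= f b - f a.
Proof.
move=> ab f_deriv df_ge; have [c c_ab ->] := MVT_nonneg ab f_deriv.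
by rewrite ler_wpM2r ?df_ge // subr_ge0; case/andP: ab.
Qed.

End RealDerivatives.

Section EuclideanInner.
Variables (R : realType) (d : nat).
Implicit Types u w z : 'rV[R]_d.

Lemma einnerC u w : einner u w = einner w u.
Proof. by apply: eq_bigr => k _; rewrite mulrC. Qed.

Lemma einnerDl u w z : einner (u + w) z = einner u z + einner w z.
Proof.
by rewrite /einner -big_split; apply: eq_bigr => k _; rewrite !mxE mulrDl.
Qed.

Lemma einnerNl u w : einner (- u) w = - einner u w.
Proof. by rewrite /einner -sumrN; apply: eq_bigr => k _; rewrite !mxE mulNr. Qed.

Lemma einnerZl (c : R) u w : einner (c *: u) w = c * einner u w.
Proof.
by rewrite /einner mulr_sumr; apply: eq_bigr => k _; rewrite !mxE mulrA.
Qed.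

Lemma einnerBl u w z : einner (u - w) z = einner u z - einner w z.
Proof. by rewrite einnerDl einnerNl. Qed.

Lemma einnerDr u w z : einner z (u + w) = einner z u + einner z w.
Proof. by rewrite einnerC einnerDl !(einnerC z). Qed.

Lemma einnerNr u w : einner w (- u) = - einner w u.
Proof. by rewrite einnerC einnerNl einnerC. Qed.

Lemma einnerBr u w z : einner z (u - w) = einner z u - einner z w.
Proof. by rewrite einnerDr einnerNr. Qed.

Lemma einnerZr (c : R) u w : einner w (c *: u) = c * einner w u.
Proof. by rewrite einnerC einnerZl einnerC. Qed.

Lemma einner0l w : einner 0 w = 0.
Proof. by rewrite -(scale0r 0) einnerZl mul0r. Qed.

Lemma einner0r w : einner w 0 = 0.
Proof. by rewrite einnerC einner0l. Qed.

Lemma einner_suml I (r : seq I) (P : pred I) (F : I -> 'rV[R]_d) w :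
  einner (\sum_(j <- r | P j) F j) w = \sum_(j <- r | P j) einner (F j) w.
Proof. by elim/big_rec2: _ => [|j a b _ <-]; rewrite ?einner0l ?einnerDl. Qed.

Lemma einner_sumr I (r : seq I) (P : pred I) (F : I -> 'rV[R]_d) w :
  einner w (\sum_(j <- r | P j) F j) = \sum_(j <- r | P j) einner w (F j).
Proof. by rewrite einnerC einner_suml; under eq_bigr do rewrite einnerC. Qed.

Lemma einner_ge0 u : 0 <= einner u u.
Proof. by apply: sumr_ge0 => k _; rewrite -expr2 sqr_ge0. Qed.

Lemma einner_eq0 u : (einner u u == 0) = (u == 0).
Proof.
apply/idP/eqP => [|->]; last by rewrite einner0l.
rewrite psumr_eq0 => [/allP u0|k _]; last by rewrite -expr2 sqr_ge0.
apply/matrixP => i k; rewrite mxE (ord1 i).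
by have := u0 k (mem_index_enum k); rewrite -expr2 sqrf_eq0 => /eqP.
Qed.

Lemma einner_gt0 u : u != 0 -> 0 < einner u u.
Proof. by rewrite lt_def einner_ge0 einner_eq0 andbT. Qed.

Lemma enorm_ge0 u : 0 <= enorm u.
Proof. exact: sqrtr_ge0. Qed.

Lemma enorm_sqr u : enorm u ^+ 2 = einner u u.
Proof. by rewrite sqr_sqrtr // einner_ge0. Qed.

Lemma enorm0 : enorm (0 : 'rV[R]_d) = 0.
Proof. by rewrite /enorm einner0l sqrtr0. Qed.

Lemma enormZ (c : R) u : enorm (c *: u) = `|c| * enorm u.
Proof.
by rewrite /enorm einnerZl einnerZr mulrA -expr2 sqrtrM ?sqr_ge0 // sqrtr_sqr.
Qed.

Lemma enormN u : enorm (- u) = enorm u.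
Proof. by rewrite -scaleN1r enormZ normrN1 mul1r. Qed.

Lemma enormB u w : enorm (u - w) = enorm (w - u).
Proof. by rewrite -enormN opprB. Qed.

Lemma enorm_normalize_le1 u : enorm ((enorm u)^-1 *: u) <= 1.
Proof.
rewrite enormZ ger0_norm ?invr_ge0 ?enorm_ge0 //.
by have [->|/negPf nz] := eqVneq (enorm u) 0; rewrite ?invr0 ?mul0r // mulVf ?nz.
Qed.

Lemma einner_sqr_le u w : einner u w ^+ 2 <= einner u u * einner w w.
Proof.
have [->|w0] := eqVneq w 0; first by rewrite !einner0r expr0n mulr0.
pose z := einner w w *: u - einner u w *: w.
have : 0 <= einner z z := einner_ge0 z.
rewrite einnerBl !einnerBr !einnerZl !einnerZr (einnerC w u).
set a := einner u u; set b := einner u w; set c := einner w w.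
have -> : c * (c * a) - c * (b * b) - (b * (c * b) - b * (b * c))
        = c * (a * c - b ^+ 2) by ring.
by rewrite pmulr_rge0 ?einner_gt0 // subr_ge0.
Qed.

Lemma normr_einner_le u w : `|einner u w| <= enorm u * enorm w.
Proof.
rewrite -sqrtrM ?einner_ge0 // -sqrtr_sqr.
by rewrite ler_wsqrtr // einner_sqr_le.
Qed.

Lemma enormD_le u w : enorm (u + w) <= enorm u + enorm w.
Proof.
rewrite -(ler_pXn2r (_ : 0 < 2)%N) ?nnegrE ?addr_ge0 ?enorm_ge0 //.
rewrite enorm_sqr einnerDl !einnerDr (einnerC w u) sqrrD !enorm_sqr.
have := ler_norm (einner u w); have := normr_einner_le u w; lra.
Qed.

Lemma enorm_sum_le I (r : seq I) (P : pred I) (F : I -> 'rV[R]_d) :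
  enorm (\sum_(j <- r | P j) F j) <= \sum_(j <- r | P j) enorm (F j).
Proof.
elim/big_rec2: _ => [|j a b _ IH]; first by rewrite enorm0.
by rewrite (le_trans (enormD_le _ _)) // lerD2l.
Qed.

Lemma enorm_sum_le_const n (P : pred 'I_n) (F : 'I_n -> 'rV[R]_d) (B : R) :
  0 <= B -> (forall j, P j -> enorm (F j) <= B) ->
  enorm (\sum_(j < n | P j) F j) <= n%:R * B.
Proof.
move=> B_ge0 FB; apply: le_trans (enorm_sum_le _ _ _) _.
rewrite -[n in n%:R]card_ord -sum1_card natr_sum mulr_suml.
apply: le_trans (ler_sum _ (fun j P => FB j P)) _.
by rewrite [leRHS](bigID P) /= mul1r lerDl sumr_ge0 // => j _; rewrite mul1r.
Qed.

End EuclideanInner.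

Section EuclideanDerivatives.
Variables (R : realType) (d : nat).
Implicit Types (a b : R -> 'rV[R]_d) (da db : 'rV[R]_d) (t : R).

Lemma is_derive_einner a b da db t : is_derive t 1 a da -> is_derive t 1 b db ->
  is_derive t 1 (fun s => einner (a s) (b s)) (einner (a t) db + einner da (b t)).
Proof.
move=> a_deriv b_deriv; rewrite /einner -big_split /=; apply: is_derive_sumr => k.
apply: is_derive_eq.
  exact: is_deriveM (is_derive_mxE k a_deriv) (is_derive_mxE k b_deriv).
by rewrite /= (mulrC (da 0 k)).
Qed.

Lemma is_derive_enorm a da t : a t != 0 -> is_derive t 1 a da ->
  is_derive t 1 (fun s => enorm (a s)) (einner (a t) da / enorm (a t)).
Proof.
move=> a_neq0 a_deriv; have a2_gt0 := einner_gt0 a_neq0.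
apply: is_derive_eq.
  exact: is_derive_sqrt a2_gt0 (is_derive_einner a_deriv a_deriv).
rewrite (einnerC da) -/(enorm (a t)).
have : enorm (a t) != 0 by rewrite gt_eqF // sqrtr_gt0.
by move: (enorm (a t)) => n n_neq0; field.
Qed.

End EuclideanDerivatives.

Section DissipationLimit.
Variables (R : realType) (E dE P dP : R -> R) (c K : R).
Hypothesis c_gt0 : 0 < c.
Hypothesis E_deriv : forall t : R, 0 <= t -> is_derive t 1 E (dE t).
Hypothesis P_deriv : forall t : R, 0 <= t -> is_derive t 1 P (dP t).
Hypothesis E_ge0 : forall t : R, 0 <= t -> 0 <= E t.
Hypothesis P_ge0 : forall t : R, 0 <= t -> 0 <= P t.
Hypothesis dE_le : forall t : R, 0 <= t -> dE t <= - c * P t.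
Hypothesis dP_ge : forall t : R, 0 <= t -> - K <= dP t.

Lemma dissipation_noninc s t : 0 <= s <= t -> E t <= E s.
Proof.
move=> st; have s_ge0 : 0 <= s by case/andP: st.
suff : E t - E s <= 0 * (t - s) by rewrite mul0r subr_le0.
apply: mean_value_le st E_deriv _ => r /andP[sr _].
have r_ge0 := le_trans s_ge0 sr.
apply: le_trans (dE_le r_ge0) _.
by rewrite mulNr oppr_le0 mulr_ge0 ?P_ge0 // ltW.
Qed.

(* Short enough that P' >= -K keeps P >= eps/2 on [t, t + step eps]
   whenever P t >= eps. *)
Let step eps := eps / (2 * Num.max 1 K).

Let step_gt0 eps : 0 < eps -> 0 < step eps.
Proof. by move=> eps_gt0; rewrite divr_gt0 ?mulr_gt0 // lt_max ltr01. Qed.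

Lemma dissipation_drop eps t : 0 < eps -> 0 <= t -> eps <= P t ->
  E (t + step eps) - E t <= - (c * (eps / 2)) * step eps.
Proof.
move=> eps_gt0 t_ge0 P_eps.
have M_gt0 : 0 < Num.max 1 K by rewrite lt_max ltr01.
have M_step : Num.max 1 K * step eps = eps / 2.
  by rewrite /step; field; rewrite gt_eqF.
have t_step : 0 <= t <= t + step eps by rewrite t_ge0 lerDl ltW ?step_gt0.
have := mean_value_le (m := - (c * (eps / 2))) t_step E_deriv.
rewrite [t + _ - t]addrC addKr; apply=> s /andP[ts s_step].
have s_ge0 : 0 <= s := le_trans t_ge0 ts.
have P_half : eps / 2 <= P s.
  have t_s : 0 <= t <= s by rewrite t_ge0.
  have dP_ts r : t <= r <= s -> - K <= dP r.
    by case/andP=> tr _; apply: dP_ge; exact: le_trans tr.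
  have := mean_value_ge t_s P_deriv dP_ts.
  have : K * (s - t) <= eps / 2.
    rewrite -M_step (@le_trans _ _ (Num.max 1 K * (s - t))) //.
      by rewrite ler_wpM2r ?subr_ge0 // le_max lexx orbT.
    rewrite ler_wpM2l ?(ltW M_gt0) //; lra.
  rewrite mulNr; lra.
apply: le_trans (dE_le s_ge0) _.
by rewrite mulNr lerN2 ler_wpM2l ?(ltW c_gt0).
Qed.

Lemma dissipation_cvg0 : P t @[t --> +oo] --> 0.
Proof.
apply/cvgrPdist_lt => eps eps_gt0.
suff [T [T_ge0 PT]] : exists T, 0 <= T /\ forall t, T <= t -> P t < eps.
  exists T; split => [|t /ltW Tt]; first exact: num_real.
  by rewrite sub0r normrN ger0_norm ?PT ?P_ge0 // (le_trans T_ge0).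
apply: contrapT => P_often.
have {}P_often T : 0 <= T -> exists t, T <= t /\ eps <= P t.
  move=> T_ge0; apply: contrapT => P_small.
  apply: P_often; exists T; split => // t Tt.
  by rewrite ltNge; apply/negP => P_big; apply: P_small; exists t.
pose gap := c * (eps / 2) * step eps.
have gap_gt0 : 0 < gap.
  by rewrite /gap mulr_gt0 ?step_gt0 // mulr_gt0 // divr_gt0.
have E_low n : exists t, 0 <= t /\ E t <= E 0 - n%:R * gap.
  elim: n => [|n [t [t_ge0 Et]]]; first by exists 0; rewrite mul0r subr0.
  have [s [ts P_eps]] := P_often t t_ge0.
  have s_ge0 : 0 <= s := le_trans t_ge0 ts.
  exists (s + step eps); split.
    exact: addr_ge0 s_ge0 (ltW (step_gt0 eps_gt0)).
  have := dissipation_drop eps_gt0 s_ge0 P_eps.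
  have t_s : 0 <= t <= s by rewrite t_ge0.
  have := dissipation_noninc t_s.
  rewrite mulNr -/gap -addn1 natrD mulrDl mul1r; lra.
have [t [t_ge0 Et]] := E_low (Num.bound (E 0 / gap)).
have : E 0 < (Num.bound (E 0 / gap))%:R * gap.
  rewrite -ltr_pdivrMr //; apply: archi_boundP.
  by rewrite divr_ge0 ?E_ge0 // ltW.
have := E_ge0 t_ge0; lra.
Qed.

End DissipationLimit.

Section DoubleSums.
Variables (R : numDomainType) (n : nat) (f : 'I_n -> 'I_n -> R).
Hypothesis f_ge0 : forall i j, 0 <= f i j.

Lemma ler_double_sum i j : f i j <= \sum_i \sum_j f i j.
Proof.
rewrite (bigD1 i) //= (bigD1 j) //= -addrA lerDl.
by rewrite addr_ge0 ?sumr_ge0 // => k _; rewrite sumr_ge0.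
Qed.

Lemma ler_double_sum2 i j : i != j -> f i j + f j i <= \sum_i \sum_j f i j.
Proof.
move=> ij; rewrite (bigD1 i) //=; apply: lerD.
  by rewrite (bigD1 j) //= lerDl sumr_ge0.
rewrite (bigD1 j) 1?eq_sym //= -[f j i]addr0 lerD //.
  by rewrite (bigD1 i) //= lerDl sumr_ge0.
by rewrite sumr_ge0 // => k _; rewrite sumr_ge0.
Qed.

End DoubleSums.

Section VelocityDispersion.
Variables (R : realType) (N d : nat).
Implicit Types V : 'I_N -> 'rV[R]_d.

Definition vdisp V : R := \sum_i \sum_j einner (V j - V i) (V j - V i).

Lemma vdisp_ge0 V : 0 <= vdisp V.
Proof. by apply: sumr_ge0 => i _; apply: sumr_ge0 => j _; exact: einner_ge0. Qed.

Lemma max_pair_ge0 V : 0 <= max_pair V.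
Proof.
by rewrite /max_pair; elim/big_rec: _ => // i m _ m_ge0; rewrite le_max m_ge0 orbT.
Qed.

Lemma max_one_ge0 V : 0 <= max_one V.
Proof.
by rewrite /max_one; elim/big_rec: _ => // i m _ m_ge0; rewrite le_max m_ge0 orbT.
Qed.

Lemma le_max_pair V i j : enorm (V j - V i) <= max_pair V.
Proof. exact: le_trans (le_bigmax _ _ j) (le_bigmax _ _ i). Qed.

Lemma max_pair_le V (M : R) : 0 <= M ->
  (forall i j, enorm (V j - V i) <= M) -> max_pair V <= M.
Proof. by move=> M_ge0 VM; apply: bigmax_le => // i _; apply: bigmax_le. Qed.

Lemma max_pair_le_sqrt_vdisp V : max_pair V <= Num.sqrt (vdisp V).
Proof.
apply: max_pair_le => [|i j]; first exact: sqrtr_ge0.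
apply: ler_wsqrtr.
by apply: (ler_double_sum (f := fun i j => einner (V j - V i) (V j - V i))) => *;
  exact: einner_ge0.
Qed.

Lemma max_one_le_max_pair V : \sum_i V i = 0 -> max_one V <= max_pair V.
Proof.
move=> V_sum0; apply: bigmax_le => [|i _]; first exact: max_pair_ge0.
have N_gt0 : 0 < N%:R :> R by rewrite ltr0n (leq_ltn_trans (leq0n i)).
have sumV : \sum_j (V i - V j) = N%:R *: V i.
  by rewrite sumrB V_sum0 subr0 sumr_const card_ord scaler_nat.
rewrite -(ler_pM2l N_gt0) -[X in X * _ <= _]ger0_norm ?(ltW N_gt0) //.
rewrite -enormZ -sumV.
apply: enorm_sum_le_const (max_pair_ge0 V) _ => j _.
by rewrite enormB le_max_pair.
Qed.

End VelocityDispersion.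

Section PairSums.
Variables (R : realType) (n d : nat).
Variables (a : 'I_n -> 'I_n -> R) (u : 'I_n -> 'I_n -> 'rV[R]_d).
Hypothesis a_sym : forall i j, a i j = a j i.
Hypothesis u_anti : forall i j, u j i = - u i j.

Lemma sum_pair_antisym_eq0 : \sum_i \sum_j a i j *: u i j = 0.
Proof.
set S := LHS; have S_opp : S = - S.
  rewrite {1}/S exchange_big -sumrN; apply: eq_bigr => i _.
  by rewrite -sumrN; apply: eq_bigr => j _; rewrite a_sym u_anti scalerN.
have /eqP : 2%:R *: S = 0 by rewrite scaler_nat mulr2n {1}S_opp addNr.
by rewrite scaler_eq0 pnatr_eq0 => /eqP.
Qed.

Lemma sum_pair_einner_symmetrize (V : 'I_n -> 'rV[R]_d) :
  \sum_i \sum_j a i j * einner (V i) (u i j) =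
  - 2^-1 * \sum_i \sum_j a i j * einner (V j - V i) (u i j).
Proof.
set S := LHS; have S_swap : S = - \sum_i \sum_j a i j * einner (V j) (u i j).
  rewrite /S exchange_big -sumrN; apply: eq_bigr => i _.
  by rewrite -sumrN; apply: eq_bigr => j _; rewrite a_sym u_anti einnerNr mulrN.
have -> : \sum_i \sum_j a i j * einner (V j - V i) (u i j) =
          \sum_i \sum_j a i j * einner (V j) (u i j) - S.
  rewrite /S -sumrB; apply: eq_bigr => i _; rewrite -sumrB.
  by apply: eq_bigr => j _; rewrite einnerBl mulrBr.
by rewrite S_swap; field.
Qed.

End PairSums.

Section BondingForce.
Variables (R : realType) (N d : nat) (psi : R -> R) (k0 k1 k2 : R)
  (dinf : 'I_N -> 'I_N -> R).
Hypothesis dinf_sym : forall i j, dinf i j = dinf j i.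
Hypothesis dinf_diag : forall i, dinf i i = 0.
Implicit Types X V : 'I_N -> 'rV[R]_d.

Definition bond_dir X i j : 'rV[R]_d := (enorm (X j - X i))^-1 *: (X j - X i).

Lemma bond_dirN X i j : bond_dir X j i = - bond_dir X i j.
Proof. by rewrite /bond_dir enormB -scalerN opprB. Qed.

Lemma enorm_bond_dir_le1 X i j : enorm (bond_dir X i j) <= 1.
Proof. exact: enorm_normalize_le1. Qed.

Lemma cs_forceE X V i : cs_force psi k0 k1 k2 dinf X V i =
  (k0 / N%:R) *: \sum_j psi (enorm (X j - X i)) *: (V j - V i)
  + (k1 / N%:R) *: \sum_j einner (V j - V i) (bond_dir X i j) *: bond_dir X i j
  + (k2 / N%:R) *: \sum_j (enorm (X j - X i) - dinf i j) *: bond_dir X i j.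
Proof.
have drop_diag (F : 'I_N -> 'rV[R]_d) : F i = 0 ->
    \sum_(j < N | j != i) F j = \sum_j F j.
  by move=> Fi0; rewrite [RHS](bigD1 i) //= Fi0 add0r.
rewrite /cs_force /= !drop_diag //.
  by rewrite subrr enorm0 dinf_diag subrr scale0r.
by rewrite subrr einner0l scale0r.
Qed.

Lemma cs_force_sum0 X V : \sum_i cs_force psi k0 k1 k2 dinf X V i = 0.
Proof.
under eq_bigr do rewrite cs_forceE.
rewrite !big_split /= -!scaler_sumr !sum_pair_antisym_eq0 ?scaler0 ?addr0 //.
- by move=> i j; rewrite enormB dinf_sym.
- exact: bond_dirN.
- by move=> i j; rewrite bond_dirN -opprB einnerNl einnerNr opprK.
- exact: bond_dirN.
- by move=> i j; rewrite enormB.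
- by move=> i j; rewrite opprB.
Qed.

Definition cs_dissipation X V : R :=
  k0 / (2 * N%:R) *
    \sum_i \sum_j psi (enorm (X j - X i)) * einner (V j - V i) (V j - V i)
  + k1 / (2 * N%:R) *
    \sum_i \sum_j einner (V j - V i) (bond_dir X i j) ^+ 2.

Lemma cs_power_balance X V :
  \sum_i einner (V i) (cs_force psi k0 k1 k2 dinf X V i)
  + k2 / (2 * N%:R) * \sum_i \sum_j
      (enorm (X j - X i) - dinf i j) * einner (V j - V i) (bond_dir X i j)
  = - cs_dissipation X V.
Proof.
have dir_sym i j : einner (V i - V j) (bond_dir X j i) =
                   einner (V j - V i) (bond_dir X i j).
  by rewrite bond_dirN -opprB einnerNl einnerNr opprK.
under eq_bigr do rewrite cs_forceE !einnerDr !einnerZr !einner_sumr.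
rewrite !big_split /= -!mulr_sumr.
under [X in k0 / _ * X]eq_bigr do under eq_bigr do rewrite einnerZr.
under [X in k1 / _ * X]eq_bigr do under eq_bigr do rewrite einnerZr.
under [X in k2 / _ * X]eq_bigr do under eq_bigr do rewrite einnerZr.
rewrite (sum_pair_einner_symmetrize (a := fun i j => psi (enorm (X j - X i)))
  (u := fun i j => V j - V i)); last 2 first.
- by move=> i j; rewrite enormB.
- by move=> i j; rewrite opprB.
rewrite (sum_pair_einner_symmetrize (u := bond_dir X)
  (a := fun i j => einner (V j - V i) (bond_dir X i j))) ?dir_sym //; last first.
  exact: bond_dirN.
rewrite (sum_pair_einner_symmetrize (u := bond_dir X)
  (a := fun i j => enorm (X j - X i) - dinf i j)); last 2 first.
- by move=> i j; rewrite enormB dinf_sym.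
- exact: bond_dirN.
rewrite /cs_dissipation.
under [X in _ = - (_ + _ * X)]eq_bigr do under eq_bigr do rewrite expr2.
by rewrite !invfM; ring.
Qed.

Lemma cs_dissipation_ge_vdisp X V (m : R) : 0 <= k0 -> 0 <= k1 ->
  (forall i j, m <= psi (enorm (X j - X i))) ->
  k0 * m / (2 * N%:R) * vdisp V <= cs_dissipation X V.
Proof.
move=> k0_ge0 k1_ge0 psi_ge.
have -> : k0 * m / (2 * N%:R) * vdisp V = k0 / (2 * N%:R) * (m * vdisp V) by ring.
rewrite /cs_dissipation -[X in X <= _]addr0 lerD //.
  rewrite ler_wpM2l ?divr_ge0 // /vdisp mulr_sumr; apply: ler_sum => i _.
  by rewrite mulr_sumr; apply: ler_sum => j _; rewrite ler_wpM2r ?einner_ge0.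
by rewrite mulr_ge0 ?divr_ge0 ?sumr_ge0 // => i _; rewrite sumr_ge0 // => j _;
  rewrite sqr_ge0.
Qed.

Lemma enorm_cs_force_le X V i (psiM beta rho : R) :
  0 <= k0 -> 0 <= k1 -> 0 <= k2 ->
  (forall r, 0 <= r -> 0 <= psi r <= psiM) ->
  (forall j, enorm (V j - V i) <= beta) ->
  (forall j, `|enorm (X j - X i) - dinf i j| <= rho) ->
  enorm (cs_force psi k0 k1 k2 dinf X V i) <= (k0 * psiM + k1) * beta + k2 * rho.
Proof.
move=> k0_ge0 k1_ge0 k2_ge0 psi_bd w_le dev_le.
have N_gt0 : 0 < N%:R :> R by rewrite ltr0n (leq_ltn_trans (leq0n i)).
have beta_ge0 : 0 <= beta := le_trans (enorm_ge0 _) (w_le i).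
have rho_ge0 : 0 <= rho := le_trans (normr_ge0 _) (dev_le i).
have psiM_ge0 : 0 <= psiM by have /andP[/le_trans] := psi_bd 0 (lexx 0); apply.
have scaled_sum_le (k B : R) (F : 'I_N -> 'rV[R]_d) : 0 <= k -> 0 <= B ->
    (forall j, enorm (F j) <= B) -> enorm ((k / N%:R) *: \sum_j F j) <= k * B.
  move=> k_ge0 B_ge0 F_le; rewrite enormZ ger0_norm ?divr_ge0 //.
  apply: le_trans (ler_wpM2l _ (enorm_sum_le_const B_ge0 (fun j _ => F_le j))) _.
    by rewrite divr_ge0.
  by rewrite mulrA divfK ?gt_eqF.
rewrite cs_forceE mulrDl -mulrA.
apply: le_trans (enormD_le _ _) _; apply: lerD; last first.
  apply: scaled_sum_le => // j; rewrite enormZ -[rho]mulr1.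
  by rewrite ler_pM ?normr_ge0 ?enorm_ge0 ?dev_le ?enorm_bond_dir_le1.
apply: le_trans (enormD_le _ _) _; apply: lerD.
  apply: scaled_sum_le; rewrite ?mulr_ge0 // => j.
  have /andP[psi_ge0 psi_le] := psi_bd _ (enorm_ge0 (X j - X i)).
  by rewrite enormZ ger0_norm // ler_pM ?enorm_ge0 ?w_le.
apply: scaled_sum_le => // j; rewrite enormZ.
have e_le1 := enorm_bond_dir_le1 X i j.
apply: le_trans (ler_wpM2r (enorm_ge0 _) (normr_einner_le _ _)) _.
rewrite -mulrA -[beta]mulr1 ler_pM ?mulr_ge0 ?enorm_ge0 //.
by rewrite -[1]mulr1 ler_pM ?enorm_ge0.
Qed.

Lemma cs_energy_ge0 X V : 0 <= k2 -> 0 <= cs_energy k2 dinf X V.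
Proof.
move=> k2_ge0; rewrite addr_ge0 ?mulr_ge0 ?divr_ge0 ?mulr_ge0 ?sumr_ge0 //.
  by move=> i _; rewrite sqr_ge0.
by move=> i _; rewrite sumr_ge0 // => j _; rewrite sqr_ge0.
Qed.

Lemma enorm_le_cs_energy X V i : 0 <= k2 ->
  enorm (V i) <= Num.sqrt (2 * cs_energy k2 dinf X V).
Proof.
move=> k2_ge0; rewrite -[enorm _]ger0_norm ?enorm_ge0 // -sqrtr_sqr ler_wsqrtr //.
have bond_ge0 : 0 <= k2 / (4 * N%:R) *
    \sum_i \sum_j (enorm (X j - X i) - dinf i j) ^+ 2.
  rewrite mulr_ge0 ?divr_ge0 ?sumr_ge0 // => k _.
  by rewrite sumr_ge0 // => l _; rewrite sqr_ge0.
have : enorm (V i) ^+ 2 <= \sum_k enorm (V k) ^+ 2.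
  by rewrite (bigD1 i) //= lerDl sumr_ge0 // => k _; rewrite sqr_ge0.
rewrite /cs_energy; lra.
Qed.

Lemma bond_dev_le_cs_energy X V i j : 0 < k2 ->
  `|enorm (X j - X i) - dinf i j| <=
  Num.sqrt (2 * N%:R * cs_energy k2 dinf X V / k2).
Proof.
move=> k2_gt0; have [<-|ij] := eqVneq i j.
  by rewrite subrr enorm0 dinf_diag subrr normr0 sqrtr_ge0.
have N_gt0 : 0 < N%:R :> R by rewrite ltr0n (leq_ltn_trans (leq0n i)).
rewrite -sqrtr_sqr ler_wsqrtr // ler_pdivlMr //.
set dev := enorm (X j - X i) - dinf i j.
have pair_le : dev ^+ 2 + dev ^+ 2 <=
    \sum_i \sum_j (enorm (X j - X i) - dinf i j) ^+ 2.
  have := ler_double_sum2 (f := fun i j => (enorm (X j - X i) - dinf i j) ^+ 2)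
    (fun i j => sqr_ge0 _) ij.
  by rewrite [enorm (X i - X j)]enormB [dinf j i]dinf_sym.
have v_ge0 : 0 <= 2^-1 * \sum_k enorm (V k) ^+ 2.
  by rewrite mulr_ge0 ?sumr_ge0 // => k _; rewrite sqr_ge0.
have := ler_wpM2l (ltW (divr_gt0 k2_gt0 (mulr_gt0 (ltr0Sn _ 3) N_gt0))) pair_le.
rewrite /cs_energy -/dev => h.
have -> : dev ^+ 2 * k2 = 2 * N%:R * (k2 / (4 * N%:R) * (dev ^+ 2 + dev ^+ 2)).
  by field; rewrite gt_eqF.
by rewrite ler_pM2l ?mulr_gt0 //; lra.
Qed.

Lemma cs_U_ge0 X0 V0 : 0 <= cs_U k2 dinf X0 V0.
Proof.
rewrite addr_ge0 ?sqrtr_ge0 //.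
by elim/big_rec: _ => // k m _ m_ge0; rewrite le_max m_ge0 orbT.
Qed.

Lemma enorm_le_cs_U X V X0 V0 i j : 0 < k2 ->
  cs_energy k2 dinf X V <= cs_energy k2 dinf X0 V0 ->
  enorm (X j - X i) <= cs_U k2 dinf X0 V0.
Proof.
move=> k2_gt0 E_le.
have [<-|ij] := eqVneq i j; first by rewrite subrr enorm0 cs_U_ge0.
have d_le : dinf i j <=
    \big[Num.max/0]_(i < N) \big[Num.max/0]_(j < N | i != j) dinf i j.
  by apply: le_trans (le_bigmax _ _ i); exact: le_bigmax_cond.
have dev_le := bond_dev_le_cs_energy X V i j k2_gt0.
have sqrt_le : Num.sqrt (2 * N%:R * cs_energy k2 dinf X V / k2) <=
               Num.sqrt (2 * N%:R * cs_energy k2 dinf X0 V0 / k2).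
  by rewrite ler_wsqrtr // ler_wpM2r ?invr_ge0 ?(ltW k2_gt0) // ler_wpM2l ?mulr_ge0.
have := ler_norm (enorm (X j - X i) - dinf i j).
rewrite /cs_U; lra.
Qed.

End BondingForce.

Section Trajectory.
Variables (R : realType) (N d : nat) (psi : R -> R) (psiM k0 k1 k2 : R)
  (dinf : 'I_N -> 'I_N -> R) (x v : 'I_N -> R -> 'rV[R]_d).
Hypothesis N_gt0 : (0 < N)%N.
Hypothesis dinf_sym : forall i j, dinf i j = dinf j i.
Hypothesis dinf_diag : forall i, dinf i i = 0.
Hypothesis psi_bd : forall r, 0 <= r -> 0 <= psi r <= psiM.
Hypotheses (k0_gt0 : 0 < k0) (k1_gt0 : 0 < k1) (k2_gt0 : 0 < k2).
Hypothesis sol : global_smooth_solution psi k0 k1 k2 dinf x v.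
Implicit Types (s t : R) (i j : 'I_N).

Let force t := cs_force psi k0 k1 k2 dinf (x^~ t) (v^~ t).
Let energy t := cs_energy k2 dinf (x^~ t) (v^~ t).
Let E0 := energy 0.

Let x_deriv t i : 0 <= t -> is_derive t 1 (x i) (v i t).
Proof. by case/sol. Qed.

Let v_deriv t i : 0 <= t -> is_derive t 1 (v i) (force t i).
Proof. by case/sol=> _ []. Qed.

Lemma dist_deriv t i j : 0 <= t ->
  is_derive t 1 (fun s => enorm (x j s - x i s))
    (einner (v j t - v i t) (bond_dir (x^~ t) i j)).
Proof.
move=> t_ge0; have [<-|ij] := eqVneq i j.
  under eq_fun do rewrite subrr enorm0.
  by rewrite subrr einner0l; exact: is_derive_cst.
have xij_neq0 : x j t - x i t != 0.
  by rewrite subr_eq0 eq_sym; case: (sol t_ge0) => _ [_ /(_ i j ij)].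
apply: is_derive_eq; first exact: is_derive_enorm xij_neq0
  (is_deriveB (x_deriv j t_ge0) (x_deriv i t_ge0)).
by rewrite /bond_dir einnerZr einnerC mulrC.
Qed.

Lemma energy_deriv t : 0 <= t ->
  is_derive t 1 energy (- cs_dissipation psi k0 k1 (x^~ t) (v^~ t)).
Proof.
move=> t_ge0; rewrite -(cs_power_balance psi k0 k1 k2 dinf_sym dinf_diag).
have kinetic_deriv i : is_derive t 1 (fun s => enorm (v i s) ^+ 2)
    (2 * einner (v i t) (force t i)).
  under eq_fun do rewrite enorm_sqr.
  apply: is_derive_eq (is_derive_einner (v_deriv i t_ge0) (v_deriv i t_ge0)) _.
  by rewrite (einnerC (force t i)) mulr_natl mulr2n.
have bond_deriv i j : is_derive t 1
    (fun s => (enorm (x j s - x i s) - dinf i j) ^+ 2)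
    (2 * (enorm (x j t - x i t) - dinf i j) *
     einner (v j t - v i t) (bond_dir (x^~ t) i j)).
  apply: is_derive_sqr; apply: is_derive_eq; last exact: subr0.
  exact: is_deriveB (dist_deriv i j t_ge0) (is_derive_cst _ _ _).
apply: is_derive_eq.
  apply: is_deriveD; apply: is_deriveZ; first exact: is_derive_sumr kinetic_deriv.
  exact: is_derive_sumr (fun i => is_derive_sumr (bond_deriv i)).
rewrite -[LHS]/(_ * _ + _ * _) /= -mulr_sumr.
under eq_bigr do under eq_bigr do rewrite -mulrA.
under eq_bigr do rewrite -mulr_sumr.
rewrite -mulr_sumr.
have N_neq0 : N%:R != 0 :> R by rewrite pnatr_eq0 -lt0n.
by field.
Qed.

Let dissipation_ge0 t : 0 <= cs_dissipation psi k0 k1 (x^~ t) (v^~ t).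
Proof.
have psi_ge0 i j : 0 <= psi (enorm (x j t - x i t)).
  by have /andP[] := psi_bd (enorm_ge0 (x j t - x i t)).
have := cs_dissipation_ge_vdisp (v^~ t) (ltW k0_gt0) (ltW k1_gt0) psi_ge0.
by rewrite mulr0 !mul0r.
Qed.

Lemma energy_le_E0 t : 0 <= t -> energy t <= E0.
Proof.
move=> t_ge0; rewrite -subr_le0.
have t_range : 0 <= (0 : R) <= t by rewrite lexx.
rewrite -(mul0r t) -[X in _ * X]subr0.
by apply: mean_value_le t_range energy_deriv _ => s _; rewrite oppr_le0.
Qed.

Lemma enorm_vel_diff_le t i j : 0 <= t ->
  enorm (v j t - v i t) <= 2 * Num.sqrt (2 * E0).
Proof.
move=> t_ge0; have speed_le k : enorm (v k t) <= Num.sqrt (2 * E0).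
  apply: le_trans (enorm_le_cs_energy dinf (x^~ t) (v^~ t) k (ltW k2_gt0)) _.
  by rewrite ler_wsqrtr // ler_wpM2l // energy_le_E0.
apply: le_trans (enormD_le _ _) _; rewrite enormN mulr_natl mulr2n.
by rewrite lerD ?speed_le.
Qed.

Lemma dist_le_U t i j : 0 <= t ->
  enorm (x j t - x i t) <= cs_U k2 dinf (x^~ 0) (v^~ 0).
Proof.
move=> t_ge0; apply: (enorm_le_cs_U dinf_sym dinf_diag (X := x^~ t) (V := v^~ t)).
  exact: k2_gt0.
exact: energy_le_E0.
Qed.

Let force_bound := (k0 * psiM + k1) * (2 * Num.sqrt (2 * E0))
  + k2 * Num.sqrt (2 * N%:R * E0 / k2).

Lemma force_le t i : 0 <= t -> enorm (force t i) <= force_bound.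
Proof.
move=> t_ge0; rewrite /force_bound /force.
apply: (enorm_cs_force_le (psi := psi) dinf_diag (X := x^~ t) (V := v^~ t)) => //;
  rewrite ?ltW // => j.
  exact: enorm_vel_diff_le.
apply: le_trans (bond_dev_le_cs_energy dinf_sym dinf_diag (x^~ t) (v^~ t) i j k2_gt0) _.
rewrite ler_wsqrtr // ler_wpM2r ?invr_ge0 ?(ltW k2_gt0) //.
by rewrite ler_wpM2l ?energy_le_E0.
Qed.

Let vdisp_rate t := \sum_i \sum_j
  (einner (v j t - v i t) (force t j - force t i)
   + einner (force t j - force t i) (v j t - v i t)).

Lemma vdisp_deriv t : 0 <= t ->
  is_derive t 1 (fun s => vdisp (v^~ s)) (vdisp_rate t).
Proof.
move=> t_ge0; apply: is_derive_sumr => i; apply: is_derive_sumr => j.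
by apply: is_derive_einner; apply: is_deriveB; exact: v_deriv.
Qed.

Lemma vdisp_rate_ge : exists K, forall t, 0 <= t -> - K <= vdisp_rate t.
Proof.
pose c := 2 * (2 * Num.sqrt (2 * E0) * (2 * force_bound)).
exists (\sum_(i < N) \sum_(j < N) c) => t t_ge0.
rewrite -sumrN; apply: ler_sum => i _; rewrite -sumrN; apply: ler_sum => j _.
apply: lerNnormlW; rewrite [einner (force t j - _) _]einnerC -mulr2n -mulr_natl.
rewrite normrM ger0_norm // ler_wpM2l // (le_trans (normr_einner_le _ _)) //.
rewrite ler_pM ?enorm_ge0 ?enorm_vel_diff_le //.
apply: le_trans (enormD_le _ _) _; rewrite enormN mulr_natl mulr2n.
by rewrite lerD ?force_le.
Qed.

Lemma vdisp_cvg0 (psim : R) : 0 < psim ->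
  (forall r, 0 <= r <= cs_U k2 dinf (x^~ 0) (v^~ 0) -> psim <= psi r) ->
  vdisp (v^~ t) @[t --> +oo] --> 0.
Proof.
move=> psim_gt0 psim_le; have [K rate_ge] := vdisp_rate_ge.
have c_gt0 : 0 < k0 * psim / (2 * N%:R).
  by rewrite !mulr_gt0 ?invr_gt0 ?mulr_gt0 ?ltr0n.
apply: (dissipation_cvg0 c_gt0 energy_deriv vdisp_deriv) rate_ge.
- by move=> t _; exact: cs_energy_ge0 (ltW k2_gt0).
- by move=> t _; exact: vdisp_ge0.
move=> t t_ge0; rewrite mulNr lerN2.
apply: cs_dissipation_ge_vdisp; rewrite ?ltW // => i j.
by apply: psim_le; rewrite enorm_ge0 dist_le_U.
Qed.

Lemma momentum_conserved t : 0 <= t -> \sum_i v i t = \sum_i v i 0.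
Proof.
move=> t_ge0; apply/matrixP => a k; rewrite (ord1 a) !summxE.
have sum_deriv s : 0 <= s ->
    is_derive s 1 (fun r => \sum_i v i r 0 k) (\sum_i force s i 0 k).
  move=> s_ge0; apply: is_derive_sumr => i.
  exact: is_derive_mxE (v_deriv i s_ge0).
have rate0 s : \sum_i force s i 0 k = 0.
  by rewrite -summxE (cs_force_sum0 _ _ _ _ dinf_sym dinf_diag) mxE.
have t_range : 0 <= (0 : R) <= t by rewrite lexx.
have [c _] := MVT_nonneg t_range sum_deriv.
by rewrite rate0 mul0r => /eqP; rewrite subr_eq0 => /eqP.
Qed.

End Trajectory.
Theorem theorem4p2 (R : realType) (N d : nat) (psi : R -> R) (psiM : R)
  (k0 k1 k2 : R) (dinf : 'I_N -> 'I_N -> R)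
  (x v : 'I_N -> R -> 'rV[R]_d) :
  (2 <= N)%N -> (1 <= d)%N ->
  (forall i j, dinf i j = dinf j i) -> (forall i, dinf i i = 0) ->
  loc_lipschitz0 psi ->
  (forall r, 0 <= r -> 0 <= psi r <= psiM) ->
  let X0 := fun i => x i 0 in
  let V0 := fun i => v i 0 in
  let U := cs_U k2 dinf X0 V0 in
  (exists2 psim : R, 0 < psim & forall r, 0 <= r <= U -> psim <= psi r) ->
  (forall i j : 'I_N, i != j -> 0 < enorm (X0 i - X0 j)) ->
  (forall i j : 'I_N, i != j ->
     Num.sqrt (2 * N%:R * cs_energy k2 dinf X0 V0 / k2) < dinf i j) ->
  in_S U X0 ->
  0 < k0 -> 0 < k1 -> 0 < k2 ->
  global_smooth_solution psi k0 k1 k2 dinf x v ->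
  ((exists M : R, forall t : R, 0 <= t ->
      max_pair (fun i => x i t) <= M) /\
   (max_pair (fun i => v i t) @[t --> +oo] --> (0 : R))) /\
  (\sum_(i < N) V0 i = 0 ->
   max_one (fun i => v i t) @[t --> +oo] --> (0 : R)).
Proof.
(* The dropped hypotheses (regularity of psi, d >= 1, the conditions on the
   initial data) only serve to produce the collision-free global solution,
   which is assumed here. *)
move=> N_ge2 _ dinf_sym dinf_diag _ psi_bd X0 V0 U [psim psim_gt0 psim_le] _ _ _
  k0_gt0 k1_gt0 k2_gt0 sol.
have N_gt0 : (0 < N)%N by apply: leq_trans N_ge2.
have vdisp_lim := vdisp_cvg0 N_gt0 dinf_sym dinf_diag psi_bd k0_gt0 k1_gt0 k2_gt0
  sol psim_gt0 psim_le.
have sqrt_lim : Num.sqrt (vdisp (v^~ t)) @[t --> +oo] --> 0.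
  by rewrite -sqrtr0; apply: continuous_cvg vdisp_lim; exact: sqrt_continuous.
have pair_lim : max_pair (v^~ t) @[t --> +oo] --> 0.
  apply: squeeze_cvgr (cvg_cst 0) sqrt_lim; near=> t.
  by rewrite max_pair_ge0 max_pair_le_sqrt_vdisp.
split; [split => //|].
  exists U => t t_ge0; apply: max_pair_le => [|i j]; first exact: cs_U_ge0.
  by have := dist_le_U N_gt0 dinf_sym dinf_diag psi_bd k0_gt0 k1_gt0 k2_gt0 sol
    i j t_ge0.
move=> V0_sum0; apply: squeeze_cvgr (cvg_cst 0) pair_lim; near=> t.
have t_ge0 : 0 <= t by near: t; exact: nbhs_pinfty_ge.
rewrite max_one_ge0 max_one_le_max_pair //.
by rewrite (momentum_conserved dinf_sym dinf_diag sol t_ge0).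
Unshelve. all: by end_near.
Qed.
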